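(* (a) For every $A\in\mathcal{A}$, $\widehat{\chi_A}=|\chi_A\rangle\langle\chi_A|=\mu(A)$. (b) For every random variable $f$ and every $\alpha\in\mathbb{R}$, $\widehat{\alpha f}=\alpha\widehat f$. (c) If $0\le f_1\le f_2\le\cdots$ is an increasing sequence of random variables converging pointwise to a random variable $f$, then $\widehat{f_i}\to\widehat f$ in the operator norm topology. (d) If $f,g,h$ are random variables with mutually disjoint supports, then $$\widehat{f+g+h}=\widehat{f+g}+\widehat{f+h}+\widehat{g+h}-\widehat f-\widehat g-\widehat h.$$
   Context: $(\Omega,\mathcal{A},\nu)$ is a probability space and $H=L_2(\Omega,\mathcal{A},\nu)$ is the complex Hilbert space with inner product $\langle f,g\rangle=\int\bar f g\,d\nu$. A random variable is a real-valued $f\in H$. For $A\in\mathcal{A}$, $\chi_A$ is its characteristic function and $\mu(A)=|\chi_A\rangle\langle\chi_A|$ is the operator $g\mapsto\left(\int_A g\,d\nu\right)\chi_A$. For a random variable $f\ge 0$, its quantization $\widehat f$ is the operator on $H$ given by $(\widehat f g)(y)=\int\min[f(x),f(y)]\,g(x)\,d\nu(x)$. For an arbitrary random variable $f$, write $f=f^+-f^-$ with $f^+=\max(f,0)$, $f^-=-\min(f,0)$, and define $\widehat f=\widehat{f^+}-\widehat{f^-}$. (Here $\widehat{\alpha f}$ etc. denotes the quantization of the random variable $\alpha f$.) *)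

From HB Require Import structures.
From mathcomp Require Import all_boot all_order all_algebra.
From mathcomp Require Import all_classical all_reals all_analysis.
From mathcomp Require Import complex.

Set Implicit Arguments.
Unset Strict Implicit.
Unset Printing Implicit Defensive.

Import Order.TTheory GRing.Theory Num.Theory.
Local Open Scope classical_set_scope.
Local Open Scope ring_scope.
Local Open Scope complex_scope.

Section Defs.
Context {d : measure_display} {T : measurableType d} {R : realType}.
Variable mu : {measure set T -> \bar R}.

Definition cnorm2 (z : R[i]) : R := complex.Re z ^+ 2 + complex.Im z ^+ 2.
Definition cabs (z : R[i]) : R := Num.sqrt (cnorm2 z).

Definition cint (g : T -> R[i]) : R[i] :=
  (Rintegral mu setT (fun x => complex.Re (g x)))%:C
  + 'i%C * (Rintegral mu setT (fun x => complex.Im (g x)))%:C.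

(* elements of H = L_2(Omega, A, nu) (complex-valued), given by representatives *)
Definition inL2 (g : T -> R[i]) : Prop :=
  [/\ measurable_fun setT (fun x => complex.Re (g x)),
      measurable_fun setT (fun x => complex.Im (g x)) &
      (\int[mu]_x (cnorm2 (g x))%:E < +oo)%E].

Definition l2norm (g : T -> R[i]) : \bar R :=
  Lnorm mu 2%:E (fun x => (cabs (g x))%:E).

Definition cinner (f g : T -> R[i]) : R[i] := cint (fun x => (f x)^*%C * g x).

(* random variable: real-valued element of H *)
Definition rv (f : T -> R) : Prop :=
  measurable_fun setT f /\ (\int[mu]_x ((f x) ^+ 2)%:E < +oo)%E.

(* (linear) operators on H, acting on representatives *)
Definition op := (T -> R[i]) -> (T -> R[i]).

Definition op_eq (A B : op) : Prop :=
  forall g, inL2 g -> {ae mu, forall y, A g y = B g y}.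

Definition opnorm (A : op) : \bar R :=
  ereal_sup [set l2norm (A g) | g in [set g | inL2 g /\ (l2norm g <= 1)%E]].

Definition op_add (A B : op) : op := fun g y => A g y + B g y.
Definition op_sub (A B : op) : op := fun g y => A g y - B g y.
Definition op_scale (a : R) (A : op) : op := fun g y => a%:C * A g y.

Definition ketbra (u v : T -> R[i]) : op := fun g y => cinner v g * u y.

Definition cchi (A : set T) : T -> R[i] := fun x => (\1_A x : R)%:C.

Definition muop (A : set T) : op := ketbra (cchi A) (cchi A).

Definition quant_pos (f : T -> R) : op :=
  fun g y => cint (fun x => (Num.min (f x) (f y))%:C * g x).

Definition fpos (f : T -> R) : T -> R := fun x => Num.max (f x) 0.
Definition fneg (f : T -> R) : T -> R := fun x => - Num.min (f x) 0.

Definition quant (f : T -> R) : op := op_sub (quant_pos (fpos f)) (quant_pos (fneg f)).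

End Defs.

(* Everything reduces to pointwise facts about one real kernel.  For measurable f
   and g in H, [quant f g y] is the integral of g against x |-> K (f x) (f y), where
   K u v = min(u+, v+) - min(u-, v-) satisfies |K u v| <= |v|; hence the complex
   integral is linear in the kernel.  Then (a) is K (1_A x) (1_A y) = 1_A x 1_A y,
   (b) is K (a u) (a v) = a K u v for every real a, and (d) holds because at each
   point at most one of f, g, h is nonzero, which collapses the inclusion-exclusion
   identity for K to K 0 0 = 0.
   For (c), if 0 <= F <= f and e = f - F, then |K (F x) (F y) - K (f x) (f y)| is at
   most e x + e y, so Cauchy-Schwarz gives |(quant F - quant f) g y|^2 <=
   4 ||e||^2 + 4 e(y)^2 whenever ||g|| <= 1.  Integrating in y bounds the operator
   norm by sqrt (8 ||e||^2), and ||f - F_n||_2 -> 0 by dominated convergence. *)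

From mathcomp Require Import all_boot all_order all_algebra.
From mathcomp Require Import all_classical all_reals all_analysis.
From mathcomp Require Import complex.
From mathcomp Require Import ring lra measurable_realfun.

Import Order.TTheory GRing.Theory Num.Theory.
Import numFieldNormedType.Exports.
Local Open Scope classical_set_scope.
Local Open Scope ring_scope.

Section complex_facts.
Context {R : realType}.
Local Open Scope complex_scope.

Lemma complex_ext (z w : R[i]) :
  complex.Re z = complex.Re w -> complex.Im z = complex.Im w -> z = w.
Proof. by case: z w => a b [c e] /= -> ->. Qed.

Lemma ReD (z w : R[i]) : complex.Re (z + w) = complex.Re z + complex.Re w.
Proof. by case: z w => a b []. Qed.

Lemma ImD (z w : R[i]) : complex.Im (z + w) = complex.Im z + complex.Im w.
Proof. by case: z w => a b []. Qed.

Lemma ReB (z w : R[i]) : complex.Re (z - w) = complex.Re z - complex.Re w.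
Proof. by case: z w => a b []. Qed.

Lemma ImB (z w : R[i]) : complex.Im (z - w) = complex.Im z - complex.Im w.
Proof. by case: z w => a b []. Qed.

Lemma real_complexD (a b : R) : (a + b)%:C = a%:C + b%:C :> R[i].
Proof. exact: rmorphD. Qed.

Lemma real_complexB (a b : R) : (a - b)%:C = a%:C - b%:C :> R[i].
Proof. exact: rmorphB. Qed.

Lemma real_complexM (a b : R) : (a * b)%:C = a%:C * b%:C :> R[i].
Proof. exact: rmorphM. Qed.

Lemma Re_realM (a : R) (z : R[i]) : complex.Re (a%:C * z) = a * complex.Re z.
Proof. by case: z => x y /=; ring. Qed.

Lemma Im_realM (a : R) (z : R[i]) : complex.Im (a%:C * z) = a * complex.Im z.
Proof. by case: z => x y /=; ring. Qed.

Lemma cnorm2_ge0 (z : R[i]) : 0 <= cnorm2 z.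
Proof. by rewrite addr_ge0 // sqr_ge0. Qed.

End complex_facts.

Section complex_integral.
Context {R : realType} {d : measure_display} {T : measurableType d}.
Variable mu : {measure set T -> \bar R}.
Local Open Scope complex_scope.

Definition cintegrable (u : T -> R[i]) :=
  mu.-integrable setT (EFin \o (fun x => complex.Re (u x))) /\
  mu.-integrable setT (EFin \o (fun x => complex.Im (u x))).

Lemma eq_cint u v : (forall x, u x = v x) -> cint mu u = cint mu v.
Proof. by move=> uv; congr cint; apply/funext. Qed.

Lemma Re_cint u : complex.Re (cint mu u) = \int[mu]_x complex.Re (u x).
Proof. rewrite /cint /=; ring. Qed.

Lemma Im_cint u : complex.Im (cint mu u) = \int[mu]_x complex.Im (u x).
Proof. rewrite /cint /=; ring. Qed.

Lemma Re_cint_kernel (k : T -> R) g :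
  complex.Re (cint mu (fun x => (k x)%:C * g x)) = \int[mu]_x (k x * complex.Re (g x)).
Proof. by rewrite Re_cint; apply: eq_Rintegral => x _; exact: Re_realM. Qed.

Lemma Im_cint_kernel (k : T -> R) g :
  complex.Im (cint mu (fun x => (k x)%:C * g x)) = \int[mu]_x (k x * complex.Im (g x)).
Proof. by rewrite Im_cint; apply: eq_Rintegral => x _; exact: Im_realM. Qed.

Lemma cintegrableD u v : cintegrable u -> cintegrable v ->
  cintegrable (fun x => u x + v x).
Proof.
move=> [iu1 iu2] [iv1 iv2]; split.
- apply: (eq_integrable measurableT _ _ _ (integrableD measurableT iu1 iv1)).
  by move=> x _ /=; rewrite ReD.
- apply: (eq_integrable measurableT _ _ _ (integrableD measurableT iu2 iv2)).
  by move=> x _ /=; rewrite ImD.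
Qed.

Lemma cintegrableB u v : cintegrable u -> cintegrable v ->
  cintegrable (fun x => u x - v x).
Proof.
move=> [iu1 iu2] [iv1 iv2]; split.
- apply: (eq_integrable measurableT _ _ _ (integrableB measurableT iu1 iv1)).
  by move=> x _ /=; rewrite ReB.
- apply: (eq_integrable measurableT _ _ _ (integrableB measurableT iu2 iv2)).
  by move=> x _ /=; rewrite ImB.
Qed.

Lemma cintD u v : cintegrable u -> cintegrable v ->
  cint mu (fun x => u x + v x) = cint mu u + cint mu v.
Proof.
move=> [iu1 iu2] [iv1 iv2]; apply: complex_ext.
- rewrite Re_cint [RHS]ReD !Re_cint -RintegralD //.
  by apply: eq_Rintegral => x _; rewrite ReD.
- rewrite Im_cint [RHS]ImD !Im_cint -RintegralD //.
  by apply: eq_Rintegral => x _; rewrite ImD.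
Qed.

Lemma cintB u v : cintegrable u -> cintegrable v ->
  cint mu (fun x => u x - v x) = cint mu u - cint mu v.
Proof.
move=> [iu1 iu2] [iv1 iv2]; apply: complex_ext.
- rewrite Re_cint [RHS]ReB !Re_cint -RintegralB //.
  by apply: eq_Rintegral => x _; rewrite ReB.
- rewrite Im_cint [RHS]ImB !Im_cint -RintegralB //.
  by apply: eq_Rintegral => x _; rewrite ImB.
Qed.

Lemma cintZ (a : R) u : cintegrable u ->
  cint mu (fun x => a%:C * u x) = a%:C * cint mu u.
Proof.
move=> [iu1 iu2]; apply: complex_ext.
- rewrite Re_cint [RHS]Re_realM Re_cint -RintegralZl //.
  by apply: eq_Rintegral => x _; rewrite Re_realM.
- rewrite Im_cint [RHS]Im_realM Im_cint -RintegralZl //.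
  by apply: eq_Rintegral => x _; rewrite Im_realM.
Qed.

End complex_integral.

Section square_integrals.
Context {R : realType} {d : measure_display} {T : measurableType d}.
Variable mu : {measure set T -> \bar R}.
Local Open Scope ereal_scope.

(* No measurability is needed, and none is available for [y |-> quant F g y]. *)
Lemma ge0_le_integralT (f1 f2 : T -> \bar R) : (forall x, 0 <= f1 x) ->
  (forall x, f1 x <= f2 x) -> \int[mu]_x f1 x <= \int[mu]_x f2 x.
Proof.
move=> f10 f12; have f20 x : 0 <= f2 x by apply: le_trans (f12 x).
rewrite !ge0_integralTE //; apply: ereal_sup_le => _ [h Hh <-].
by exists h => //= x; apply: le_trans (Hh x) (f12 x).
Qed.

Lemma normr_Rintegral_le (f : T -> R) : `|\int[mu]_x f x|%:E <= `|\int[mu]_x (f x)%:E|.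
Proof.
by rewrite /Rintegral; case: (\int[mu]_x _) => [r| |] //=; rewrite normr0 leey.
Qed.

Lemma cauchy_schwarz (f g : T -> R) :
  measurable_fun setT f -> measurable_fun setT g ->
  \int[mu]_x `|f x * g x|%:E <=
    (\int[mu]_x (f x ^+ 2)%:E) `^ 2^-1 * (\int[mu]_x (g x ^+ 2)%:E) `^ 2^-1.
Proof.
move=> mf mg.
have := hoelder mu mf mg (ltr0Sn _ 1) (ltr0Sn _ 1).
rewrite -[X in (X + _)%R]mul1r -[X in (_ + X)%R]mul1r -splitr => /(_ erefl).
rewrite Lnorm1 unlock /=.
have sqr_abs (h : T -> R) : (fun x => `|(h x)%:E| `^ 2) = (fun x => (h x ^+ 2)%:E).
  apply/funext => x; rewrite /= powR_mulrn ?normr_ge0 //.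
  by rewrite -normrX ger0_norm // sqr_ge0.
by rewrite !sqr_abs.
Qed.

Lemma integral_abs_mul_le_sqrt (f g : T -> R) (E : R) :
  measurable_fun setT f -> measurable_fun setT g ->
  \int[mu]_x (f x ^+ 2)%:E = E%:E -> \int[mu]_x (g x ^+ 2)%:E <= 1 ->
  \int[mu]_x `|f x * g x|%:E <= (Num.sqrt E)%:E.
Proof.
move=> mf mg hE hg; apply: le_trans (cauchy_schwarz _ _ mf mg) _.
have E0 : (0 <= E)%R.
  by rewrite -lee_fin -hE integral_ge0 // => x _; rewrite lee_fin sqr_ge0.
rewrite hE poweR_EFin powR12_sqrt // -[leRHS]mule1.
apply: lee_wpmul2l; first by rewrite lee_fin sqrtr_ge0.
rewrite -(poweR1r 2^-1); apply: gt0_ler_poweR => //; rewrite in_itv /= ?leey ?andbT //.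
by apply: integral_ge0 => x _; rewrite lee_fin sqr_ge0.
Qed.

Lemma integral_sqr_Re_le (g : T -> R[i]) :
  measurable_fun setT (fun x => complex.Re (g x)) ->
  measurable_fun setT (fun x => complex.Im (g x)) ->
  \int[mu]_x ((complex.Re (g x)) ^+ 2)%:E <= \int[mu]_x (cnorm2 (g x))%:E.
Proof.
move=> mre mim; apply: ge0_le_integral => //.
- by move=> x _; rewrite lee_fin sqr_ge0.
- exact/measurable_EFinP/measurable_funX.
- by apply/measurable_EFinP; apply: measurable_funD; exact: measurable_funX.
- by move=> x _; rewrite lee_fin lerDl sqr_ge0.
Qed.

Lemma integral_sqr_Im_le (g : T -> R[i]) :
  measurable_fun setT (fun x => complex.Re (g x)) ->
  measurable_fun setT (fun x => complex.Im (g x)) ->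
  \int[mu]_x ((complex.Im (g x)) ^+ 2)%:E <= \int[mu]_x (cnorm2 (g x))%:E.
Proof.
move=> mre mim; apply: ge0_le_integral => //.
- by move=> x _; rewrite lee_fin sqr_ge0.
- exact/measurable_EFinP/measurable_funX.
- by apply/measurable_EFinP; apply: measurable_funD; exact: measurable_funX.
- by move=> x _; rewrite lee_fin lerDr sqr_ge0.
Qed.

Lemma l2norm_sqr (u : T -> R[i]) : l2norm mu u `^ 2 = \int[mu]_x (cnorm2 (u x))%:E.
Proof.
rewrite /l2norm poweR_Lnorm //; apply: eq_integral => x _.
rewrite /= powR_mulrn ?normr_ge0 // ger0_norm ?sqrtr_ge0 //.
by rewrite sqr_sqrtr // cnorm2_ge0.
Qed.

Lemma l2normE (u : T -> R[i]) : l2norm mu u = (\int[mu]_x (cnorm2 (u x))%:E) `^ 2^-1.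
Proof. by rewrite -l2norm_sqr -poweRrM mulfV // poweRe1 // Lnorm_ge0. Qed.

Lemma l2norm_le1 (u : T -> R[i]) : l2norm mu u <= 1 -> \int[mu]_x (cnorm2 (u x))%:E <= 1.
Proof.
move=> u1; rewrite -l2norm_sqr -(poweR1r 2).
by apply: gt0_ler_poweR => //; rewrite in_itv /= ?leey ?andbT // Lnorm_ge0.
Qed.

Lemma integral_sqr_sub_cvg0 (F : nat -> T -> R) (f : T -> R) :
  measurable_fun setT f -> (forall n, measurable_fun setT (F n)) ->
  (forall n x, 0 <= F n x)%R -> (forall n x, F n x <= f x)%R ->
  (forall x, F ^~ x @ \oo --> f x) -> \int[mu]_x ((f x) ^+ 2)%:E < +oo ->
  (fun n => \int[mu]_x ((f x - F n x) ^+ 2)%:E) @ \oo --> 0.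
Proof.
move=> mf mF F0 Ff Fcvg f2.
have mfn n : measurable_fun setT (fun x => ((f x - F n x) ^+ 2)%:E).
  by apply/measurable_EFinP/measurable_funX; exact: measurable_funB.
have f2_int : mu.-integrable setT (fun x => ((f x) ^+ 2)%:E).
  apply/integrableP; split; first exact/measurable_EFinP/measurable_funX.
  by under eq_integral do rewrite /= ger0_norm ?sqr_ge0 //.
have fn_cvg : {ae mu, forall x, setT x ->
    (fun n => ((f x - F n x) ^+ 2)%:E) @ \oo --> cst 0 x}.
  apply: aeW => x _; apply: cvg_EFin; first by near=> n.
  have sub_cvg : (fun n => f x - F n x)%R @ \oo --> 0%R.
    by rewrite -(subrr (f x)); apply: cvgB; [exact: cvg_cst | exact: Fcvg].
  by under eq_fun do rewrite /= expr2; rewrite -(mulr0 0%R); apply: cvgM.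
have fn_dom : {ae mu, forall x n, setT x ->
    `|((f x - F n x) ^+ 2)%:E| <= ((f x) ^+ 2)%:E}.
  apply: aeW => x n _; rewrite /= lee_fin ger0_norm ?sqr_ge0 //.
  by have := F0 n x; have := Ff n x; nra.
have [_ _] := dominated_convergence measurableT mfn (measurable_cst _) fn_cvg f2_int fn_dom.
by rewrite integral0.
Unshelve. all: by end_near.
Qed.

End square_integrals.

Section quant_kernel.
Context {R : realDomainType}.

Definition quant_kernel (u v : R) : R :=
  Num.min (Num.max u 0) (Num.max v 0) - Num.min (- Num.min u 0) (- Num.min v 0).

Lemma quant_kernel_ge0 (u v : R) : 0 <= u -> 0 <= v -> quant_kernel u v = Num.min u v.
Proof.
move=> hu hv; rewrite /quant_kernel (max_l hu) (max_l hv) (min_r hu) (min_r hv).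
by rewrite oppr0 minxx subr0.
Qed.

Lemma quant_kernel_le0 (u v : R) : u <= 0 -> v <= 0 -> quant_kernel u v = Num.max u v.
Proof.
move=> hu hv; rewrite /quant_kernel (max_r hu) (max_r hv) (min_l hu) (min_l hv).
rewrite minxx sub0r; have [uv|vu] := leP u v.
  by rewrite min_r ?opprK // lerN2.
by rewrite min_l ?opprK // lerN2 ltW.
Qed.

Lemma quant_kernel_ge0_le0 (u v : R) : 0 <= u -> v <= 0 -> quant_kernel u v = 0.
Proof.
move=> hu hv; rewrite /quant_kernel (max_l hu) (max_r hv) (min_r hu) (min_l hv).
by rewrite oppr0 (min_l (_ : 0 <= - v)) ?subrr // oppr_ge0.
Qed.

Lemma quant_kernel_le0_ge0 (u v : R) : u <= 0 -> 0 <= v -> quant_kernel u v = 0.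
Proof.
move=> hu hv; rewrite /quant_kernel (max_r hu) (max_l hv) (min_l hu) (min_r hv).
by rewrite oppr0 (min_l hv) (min_r (_ : 0 <= - u)) ?subrr // oppr_ge0.
Qed.

Lemma quant_kernel00 : quant_kernel 0 0 = 0.
Proof. by rewrite quant_kernel_ge0 // minxx. Qed.

Lemma quant_kernelZ (a u v : R) : quant_kernel (a * u) (a * v) = a * quant_kernel u v.
Proof.
case/orP: (le_total 0 a) => ha; case/orP: (le_total 0 u) => hu;
  case/orP: (le_total 0 v) => hv.
- by rewrite !quant_kernel_ge0 ?mulr_ge0 // minr_pMr.
- by rewrite !quant_kernel_ge0_le0 ?mulr0 ?mulr_ge0 ?mulr_ge0_le0.
- by rewrite !quant_kernel_le0_ge0 ?mulr0 ?mulr_ge0 ?mulr_ge0_le0.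
- by rewrite !quant_kernel_le0 ?mulr_ge0_le0 // maxr_pMr.
- by rewrite (quant_kernel_ge0 _ _ hu hv) quant_kernel_le0 ?mulr_le0_ge0 // minr_nMr.
- by rewrite (quant_kernel_ge0_le0 _ _ hu hv) quant_kernel_le0_ge0 ?mulr0 ?mulr_le0_ge0 ?mulr_le0.
- by rewrite (quant_kernel_le0_ge0 _ _ hu hv) quant_kernel_ge0_le0 ?mulr0 ?mulr_le0_ge0 ?mulr_le0.
- by rewrite (quant_kernel_le0 _ _ hu hv) quant_kernel_ge0 ?mulr_le0 // maxr_nMr.
Qed.

Lemma normr_quant_kernel_le (u v : R) : `|quant_kernel u v| <= `|v|.
Proof.
have [u0|/ltW u0] := leP 0 u; have [v0|/ltW v0] := leP 0 v.
- by rewrite quant_kernel_ge0 // !ger0_norm ?ge_min ?lexx ?orbT // le_min u0.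
- by rewrite quant_kernel_ge0_le0 // normr0.
- by rewrite quant_kernel_le0_ge0 // normr0.
- rewrite quant_kernel_le0 // !ler0_norm ?ge_max ?u0 //.
  by rewrite lerN2 le_max lexx orbT.
Qed.

Lemma normr_minB_le (a b c e : R) : a <= c -> b <= e ->
  `|Num.min a b - Num.min c e| <= (c - a) + (e - b).
Proof.
move=> ac be; rewrite ler_norml !minEle.
by case: ifP => h1; case: ifP => h2; move: h1 h2;
  rewrite ?(ltNge a b) ?(ltNge c e) => h1 h2;
  apply/andP; split; try lra; move/negbT: h1; move/negbT: h2;
  rewrite -?ltNge => h2 h1; lra.
Qed.

Lemma normr_quant_kernelB_ge0 (u v u' v' : R) : 0 <= u -> 0 <= v -> u <= u' -> v <= v' ->
  `|quant_kernel u v - quant_kernel u' v'| <= (u' - u) + (v' - v).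
Proof.
move=> u0 v0 uu vv; rewrite !quant_kernel_ge0 //; last 2 first.
- exact: le_trans uu.
- exact: le_trans vv.
exact: normr_minB_le.
Qed.

Lemma quant_kernel_disjoint3 (a b c a' b' c' : R) :
  (b = 0 /\ c = 0) \/ (a = 0 /\ c = 0) \/ (a = 0 /\ b = 0) ->
  (b' = 0 /\ c' = 0) \/ (a' = 0 /\ c' = 0) \/ (a' = 0 /\ b' = 0) ->
  quant_kernel (a + b + c) (a' + b' + c') =
    quant_kernel (a + b) (a' + b') + quant_kernel (a + c) (a' + c')
    + quant_kernel (b + c) (b' + c')
    - quant_kernel a a' - quant_kernel b b' - quant_kernel c c'.
Proof.
by case=> [[-> ->]|[[-> ->]|[-> ->]]]; case=> [[-> ->]|[[-> ->]|[-> ->]]];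
  rewrite ?(addr0, add0r) quant_kernel00; ring.
Qed.

End quant_kernel.

Lemma disjoint_supports3 {U : Type} {V : zmodType} (f g h : U -> V) :
  [set x | f x != 0] `&` [set x | g x != 0] = set0 ->
  [set x | f x != 0] `&` [set x | h x != 0] = set0 ->
  [set x | g x != 0] `&` [set x | h x != 0] = set0 ->
  forall x, (g x = 0 /\ h x = 0) \/ (f x = 0 /\ h x = 0) \/ (f x = 0 /\ g x = 0).
Proof.
move=> Hfg Hfh Hgh x.
have zero_or_zero (u v : U -> V) :
    [set x | u x != 0] `&` [set x | v x != 0] = set0 -> u x = 0 \/ v x = 0.
  move=> Huv; have [->|ux] := eqVneq (u x) 0; first by left.
  have [->|vx] := eqVneq (v x) 0; first by right.
  by have : ([set x | u x != 0] `&` [set x | v x != 0]) x by []; rewrite Huv.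
by case: (zero_or_zero _ _ Hfg); case: (zero_or_zero _ _ Hfh);
  case: (zero_or_zero _ _ Hgh); tauto.
Qed.

Section quantization.
Context {R : realType} {d : measure_display} {T : measurableType d}.
Variable P : probability T R.
Local Open Scope complex_scope.

Lemma integrable_of_sqr (phi : T -> R) : measurable_fun setT phi ->
  (\int[P]_x ((phi x) ^+ 2)%:E < +oo)%E -> P.-integrable setT (EFin \o phi).
Proof.
move=> mphi fin.
have mphi2 : measurable_fun setT (fun x => phi x ^+ 2) by exact: measurable_funX.
have i1 : P.-integrable setT (EFin \o (fun x => 1 + phi x ^+ 2)).
  apply/integrableP; split; first exact/measurable_EFinP/measurable_funD.
  under eq_integral do rewrite /= ger0_norm ?addr_ge0 ?sqr_ge0 // EFinD.
  rewrite ge0_integralD //; last 2 first.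
  - by move=> x _; rewrite lee_fin sqr_ge0.
  - exact/measurable_EFinP.
  rewrite integral_cst //= probability_setT mule1.
  by rewrite lte_add_pinfty // ltry.
apply: le_integrable i1 => //; first exact/measurable_EFinP.
move=> x _ /=; rewrite lee_fin; apply: le_trans (ler_norm _).
have [x0|x0] := lerP 0 (phi x); [rewrite ger0_norm // | rewrite ltr0_norm //]; nra.
Qed.

Lemma cintegrable_kernel (k : T -> R) (C : R) g : measurable_fun setT k ->
  (forall x, `|k x| <= C) -> inL2 P g -> cintegrable P (fun x => (k x)%:C * g x).
Proof.
move=> mk kC [mre mim fin].
have bk : [bounded k x | x in setT].
  rewrite /bounded_near; near=> M => y _; apply: (le_trans (kC y)).
  by near: M; apply: nbhs_pinfty_ge; exact: num_real.
split.
- have iRe := integrable_of_sqr _ mre (le_lt_trans (integral_sqr_Re_le P _ mre mim) fin).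
  apply: (eq_integrable measurableT _ _ _ (integrableMr measurableT mk bk iRe)).
  by move=> x _ /=; rewrite Re_realM EFinM.
- have iIm := integrable_of_sqr _ mim (le_lt_trans (integral_sqr_Im_le P _ mre mim) fin).
  apply: (eq_integrable measurableT _ _ _ (integrableMr measurableT mk bk iIm)).
  by move=> x _ /=; rewrite Im_realM EFinM.
Unshelve. all: by end_near.
Qed.

Lemma measurable_quant_kernel (h : T -> R) c : measurable_fun setT h ->
  measurable_fun setT (fun x => quant_kernel (h x) c).
Proof.
move=> mh; apply: measurable_funB.
- by apply: measurable_minr => //; exact: measurable_maxr.
- apply: measurable_minr => //; apply: measurableT_comp => //; exact: measurable_minr.
Qed.

Lemma cintegrable_quant_kernel (h : T -> R) c g : measurable_fun setT h -> inL2 P g ->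
  cintegrable P (fun x => (quant_kernel (h x) c)%:C * g x).
Proof.
move=> mh ig; apply: (cintegrable_kernel _ `|c|) => //.
- exact: measurable_quant_kernel.
- by move=> x; exact: normr_quant_kernel_le.
Qed.

Lemma quantE (f : T -> R) g y : measurable_fun setT f -> inL2 P g ->
  quant P f g y = cint P (fun x => (quant_kernel (f x) (f y))%:C * g x).
Proof.
move=> mf ig.
have cintegrable_min (h : T -> R) : measurable_fun setT h -> (forall x, 0 <= h x) ->
    cintegrable P (fun x => (Num.min (h x) (h y))%:C * g x).
  move=> mh h0; apply: (cintegrable_kernel _ (h y)) => //; first exact: measurable_minr.
  by move=> x; rewrite ger0_norm ?ge_min ?lexx ?orbT // le_min !h0.
rewrite /quant /op_sub /quant_pos -cintB; first last.
- apply: cintegrable_min => [|x]; last by rewrite oppr_ge0 ge_min lexx orbT.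
  by apply: measurableT_comp => //; exact: measurable_minr.
- apply: cintegrable_min => [|x]; last by rewrite le_max lexx orbT.
  exact: measurable_maxr.
by congr (cint P _); apply/funext => x; rewrite -mulrBl -real_complexB.
Qed.

Lemma quant_indic (A : set T) : measurable A ->
  op_eq P (quant P (\1_A : T -> R)) (muop P A).
Proof.
move=> mA g ig; apply: aeW => y.
have indic_kernel x : quant_kernel (\1_A x) (\1_A y) = \1_A y * \1_A x :> R.
  rewrite quant_kernel_ge0 !indicE ?ler0n //.
  by case: (x \in A); case: (y \in A);
    rewrite /= ?mulr1 ?mulr0 ?minxx ?(min_l ler01) ?(min_r ler01).
rewrite quantE // /muop /ketbra /cinner /cchi.
under eq_cint do rewrite indic_kernel real_complexM -mulrA.
rewrite cintZ; last first.
  apply: (cintegrable_kernel _ 1) => // x.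
  by rewrite indicE; case: (_ \in _); rewrite ?normr1 ?normr0.
by under [X in _ = X * _]eq_cint do rewrite conjc_real; rewrite mulrC.
Qed.

Lemma quantZ (f : T -> R) (a : R) : measurable_fun setT f ->
  op_eq P (quant P (fun x => a * f x)) (op_scale a (quant P f)).
Proof.
move=> mf g ig; apply: aeW => y.
rewrite /op_scale !quantE //; last exact: measurable_funM.
under eq_cint do rewrite quant_kernelZ real_complexM -mulrA.
by rewrite cintZ //; exact: cintegrable_quant_kernel.
Qed.

Lemma quant_disjoint3 (f g h : T -> R) :
  measurable_fun setT f -> measurable_fun setT g -> measurable_fun setT h ->
  [set x | f x != 0] `&` [set x | g x != 0] = set0 ->
  [set x | f x != 0] `&` [set x | h x != 0] = set0 ->
  [set x | g x != 0] `&` [set x | h x != 0] = set0 ->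
  op_eq P (quant P (fun x => f x + g x + h x))
    (op_sub (op_sub (op_sub
       (op_add (op_add (quant P (fun x => f x + g x))
                       (quant P (fun x => f x + h x)))
               (quant P (fun x => g x + h x)))
       (quant P f)) (quant P g)) (quant P h)).
Proof.
move=> mf mg mh Hfg Hfh Hgh u iu; apply: aeW => y.
have supp := disjoint_supports3 _ _ _ Hfg Hfh Hgh.
have mfg := measurable_funD mf mg; have mfh := measurable_funD mf mh.
have mgh := measurable_funD mg mh; have mfgh := measurable_funD mfg mh.
rewrite /op_sub /op_add !quantE //.
under eq_cint => x do rewrite (quant_kernel_disjoint3 _ _ _ _ _ _ (supp x) (supp y))
  3!real_complexB 2!real_complexD !mulrBl !mulrDl.
(* cintegrableB must come first: [u x - v x] also unifies with [u x + v x]. *)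
by rewrite !cintB ?cintD;
  repeat first [apply: cintegrableB | apply: cintegrableD | exact: cintegrable_quant_kernel].
Qed.

Lemma normr_Rintegral_mul_le (D v e : T -> R) (c E : R) :
  measurable_fun setT D -> measurable_fun setT v -> measurable_fun setT e ->
  0 <= c -> (forall x, 0 <= e x) -> (forall x, `|D x| <= e x + c) ->
  (\int[P]_x ((e x) ^+ 2)%:E = E%:E)%E -> (\int[P]_x ((v x) ^+ 2)%:E <= 1)%E ->
  `|\int[P]_x (D x * v x)| <= Num.sqrt E + c.
Proof.
move=> mD mv me c0 e0 De hE hv.
have mabs (h : T -> R) : measurable_fun setT h -> measurable_fun setT (fun x => `|h x|%:E).
  by move=> mh; apply/measurable_EFinP; exact: measurableT_comp.
have int1 : (\int[P]_x (cst (1 : R) x ^+ 2)%:E = 1%:E)%E.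
  rewrite (_ : (fun x => _) = cst 1%E); last by apply/funext => x; rewrite /= expr1n.
  by rewrite integral_cst //= probability_setT mule1.
rewrite -lee_fin; apply: le_trans (normr_Rintegral_le _ _) _.
apply: le_trans (le_abse_integral _ measurableT _) _.
  exact/measurable_EFinP/measurable_funM.
apply: (@le_trans _ _ (\int[P]_x (`|e x * v x|%:E + c%:E * `|cst 1 x * v x|%:E))%E).
  apply: ge0_le_integral => //.
  - by apply: measurableT_comp => //; exact/measurable_EFinP/measurable_funM.
  - apply: emeasurable_funD; first exact/mabs/measurable_funM.
    by apply: emeasurable_funM => //; exact/mabs/measurable_funM.
  - move=> x _; rewrite /= -EFinM -EFinD lee_fin mul1r !normrM -mulrDl.
    by rewrite (ger0_norm (e0 x)) ler_wpM2r.
rewrite ge0_integralD //; last 3 first.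
- exact/mabs/measurable_funM.
- by move=> x _; rewrite mule_ge0.
- by apply: emeasurable_funM => //; exact/mabs/measurable_funM.
rewrite ge0_integralZl_EFin //; last exact/mabs/measurable_funM.
rewrite EFinD; apply: leeD; first exact: integral_abs_mul_le_sqrt.
have := integral_abs_mul_le_sqrt P _ _ _ (measurable_cst _) mv int1 hv.
rewrite sqrtr1 => int_v_le1.
by rewrite -[leRHS]mule1 lee_wpmul2l // lee_fin.
Qed.

Lemma cnorm2_quant_sub_le (F f : T -> R) (E : R) g y :
  measurable_fun setT F -> measurable_fun setT f ->
  (forall x, 0 <= F x) -> (forall x, F x <= f x) ->
  (\int[P]_x ((f x - F x) ^+ 2)%:E = E%:E)%E ->
  inL2 P g -> (\int[P]_x (cnorm2 (g x))%:E <= 1)%E ->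
  cnorm2 (op_sub (quant P F) (quant P f) g y) <= 4 * E + 4 * (f y - F y) ^+ 2.
Proof.
move=> mF mf F0 Ff hE ig g1; have [mre mim _] := ig.
have E0 : 0 <= E.
  by rewrite -lee_fin -hE integral_ge0 // => x _; rewrite lee_fin sqr_ge0.
have me : measurable_fun setT (fun x => f x - F x) by exact: measurable_funB.
have e0 x : 0 <= f x - F x by rewrite subr_ge0.
pose D x := quant_kernel (F x) (F y) - quant_kernel (f x) (f y).
have mD : measurable_fun setT D.
  by apply: measurable_funB; exact: measurable_quant_kernel.
have De x : `|D x| <= (f x - F x) + (f y - F y).
  exact: normr_quant_kernelB_ge0.
have sqr_bound (v : T -> R) : measurable_fun setT v ->
    (\int[P]_x ((v x) ^+ 2)%:E <= 1)%E ->
    (\int[P]_x (D x * v x)) ^+ 2 <= 2 * E + 2 * (f y - F y) ^+ 2.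
  move=> mv v1; have := normr_Rintegral_mul_le _ _ _ _ _ mD mv me (e0 y) e0 De hE v1.
  set r := \int[P]_x (D x * v x) => r_le.
  rewrite -(real_normK (num_real r)) expr2.
  have := ler_pM (normr_ge0 r) (normr_ge0 r) r_le r_le.
  have := sqr_sqrtr E0; have := sqr_ge0 (Num.sqrt E - (f y - F y)).
  nra.
rewrite /op_sub !quantE // -cintB;
  [| exact: cintegrable_quant_kernel | exact: cintegrable_quant_kernel].
under eq_cint do rewrite -mulrBl -real_complexB.
rewrite /cnorm2 Re_cint_kernel Im_cint_kernel.
have := sqr_bound _ mre (le_trans (integral_sqr_Re_le P _ mre mim) g1).
have := sqr_bound _ mim (le_trans (integral_sqr_Im_le P _ mre mim) g1).
lra.
Qed.

Lemma l2norm_quant_sub_le (F f : T -> R) (E : R) g :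
  measurable_fun setT F -> measurable_fun setT f ->
  (forall x, 0 <= F x) -> (forall x, F x <= f x) ->
  (\int[P]_x ((f x - F x) ^+ 2)%:E = E%:E)%E ->
  inL2 P g -> (l2norm P g <= 1)%E ->
  (l2norm P (op_sub (quant P F) (quant P f) g) <= (Num.sqrt (8 * E))%:E)%E.
Proof.
move=> mF mf F0 Ff hE ig g1.
have E0 : 0 <= E.
  by rewrite -lee_fin -hE integral_ge0 // => x _; rewrite lee_fin sqr_ge0.
have me2 : measurable_fun setT (fun x => ((f x - F x) ^+ 2)%:E).
  by apply/measurable_EFinP/measurable_funX; exact: measurable_funB.
have int_le : (\int[P]_x (cnorm2 (op_sub (quant P F) (quant P f) g x))%:E
    <= (8 * E)%:E)%E.
  apply: le_trans (ge0_le_integralT P _ (fun y => (4 * E + 4 * (f y - F y) ^+ 2)%:E) _ _) _.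
  - by move=> x; rewrite lee_fin cnorm2_ge0.
  - move=> y; rewrite lee_fin; apply: cnorm2_quant_sub_le => //.
    exact: l2norm_le1.
  under eq_integral do rewrite EFinD (EFinM 4 (_ ^+ 2)).
  rewrite ge0_integralD //; last 3 first.
  - by move=> x _; rewrite lee_fin mulr_ge0.
  - by move=> x _; rewrite mule_ge0 // lee_fin sqr_ge0.
  - exact: emeasurable_funM.
  rewrite ge0_integralZl_EFin //; last by move=> x _; rewrite lee_fin sqr_ge0.
  rewrite hE integral_cst //= probability_setT mule1 -EFinM -EFinD lee_fin; lra.
rewrite l2normE -(powR12_sqrt (mulr_ge0 _ E0)) // -poweR_EFin.
apply: gt0_ler_poweR => //; rewrite in_itv /= ?leey ?andbT ?lee_fin ?mulr_ge0 //.
by apply: integral_ge0 => x _; rewrite lee_fin cnorm2_ge0.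
Qed.

Lemma opnorm_quant_sub_le (F f : T -> R) (E : R) :
  measurable_fun setT F -> measurable_fun setT f ->
  (forall x, 0 <= F x) -> (forall x, F x <= f x) ->
  (\int[P]_x ((f x - F x) ^+ 2)%:E = E%:E)%E ->
  (0 <= opnorm P (op_sub (quant P F) (quant P f)) <= (Num.sqrt (8 * E))%:E)%E.
Proof.
move=> mF mf F0 Ff hE; apply/andP; split.
  have cnorm2_0 : (fun x : T => (cnorm2 (0 : R[i]))%:E) = cst 0%E.
    by apply/funext => x; rewrite /cnorm2 /= expr0n /= addr0.
  apply: le_trans (Lnorm_ge0 P 2%:E _) (ereal_sup_ubound _).
  exists (fun _ => 0) => //; split.
  - by split; [exact: measurable_cst | exact: measurable_cst | rewrite cnorm2_0 integral0 ltry].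
  - by rewrite l2normE cnorm2_0 integral0 poweR0r ?lee01 // invr_neq0.
apply: ge_ereal_sup => _ [g [ig g1] <-].
exact: l2norm_quant_sub_le.
Qed.

Lemma quant_cvg (F : nat -> T -> R) (f : T -> R) :
  (forall n, measurable_fun setT (F n)) -> rv P f ->
  (forall x, 0 <= F 0%N x) -> (forall n x, F n x <= F n.+1 x) ->
  (forall x, F ^~ x @ \oo --> f x) ->
  (fun n => opnorm P (op_sub (quant P (F n)) (quant P f))) @ \oo --> 0%E.
Proof.
move=> mF [mf f2] F00 Finc Fcvg.
have F0 n x : 0 <= F n x.
  by elim: n => [|n IH]; [exact: F00 | exact: le_trans IH (Finc n x)].
have Ff n x : F n x <= f x.
  have nd : nondecreasing_seq (F ^~ x) by apply/nondecreasing_seqP => m; exact: Finc.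
  by have := nondecreasing_cvgn_le nd (cvgP _ (Fcvg x)) n; rewrite (cvg_lim _ (Fcvg x)).
have int_fin n : (\int[P]_x ((f x - F n x) ^+ 2)%:E)%E \is a fin_num.
  rewrite ge0_fin_numE; last by apply: integral_ge0 => x _; rewrite lee_fin sqr_ge0.
  apply: le_lt_trans f2; apply: ge0_le_integral => //.
  - by move=> x _; rewrite lee_fin sqr_ge0.
  - by apply/measurable_EFinP/measurable_funX; exact: measurable_funB.
  - exact/measurable_EFinP/measurable_funX.
  - by move=> x _; rewrite lee_fin; have := F0 n x; have := Ff n x; nra.
pose E n := fine (\int[P]_x ((f x - F n x) ^+ 2)%:E)%E.
have E_cvg : E @ \oo --> 0.
  exact/fine_cvg/(integral_sqr_sub_cvg0 _ _ _ mf mF F0 Ff Fcvg f2).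
apply: (squeeze_cvge (f := cst 0%E) (h := fun n => (Num.sqrt (8 * E n))%:E)).
- by near=> n; apply: opnorm_quant_sub_le => //; rewrite fineK.
- exact: cvg_cst.
apply: cvg_EFin; first by near=> n.
have E8_cvg : (fun n => 8 * E n) @ \oo --> (8 * 0 : R) by apply: cvgMr.
rewrite mulr0 in E8_cvg; rewrite -sqrtr0.
apply: (cvg_comp _ _ E8_cvg); exact: sqrt_continuous.
Unshelve. all: by end_near.
Qed.

End quantization.

Theorem theorem3p1 (R : realType) (d : measure_display) (T : measurableType d)
    (P : probability T R) :
  (* (a) *)
  (forall A : set T, measurable A ->
     op_eq P (quant P (\1_A : T -> R)) (muop P A)) /\
  (* (b) *)
  (forall (f : T -> R) (a : R), rv P f ->
     op_eq P (quant P (fun x => a * f x)) (op_scale a (quant P f))) /\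
  (* (c) *)
  (forall (F : nat -> T -> R) (f : T -> R),
     (forall i, rv P (F i)) -> rv P f ->
     (forall x, 0 <= F 0%N x) ->
     (forall i x, F i x <= F i.+1 x) ->
     (forall x, (fun i => F i x) @ \oo --> f x) ->
     (fun i => opnorm P (op_sub (quant P (F i)) (quant P f))) @ \oo --> 0%E) /\
  (* (d) *)
  (forall f g h : T -> R, rv P f -> rv P g -> rv P h ->
     [set x | f x != 0] `&` [set x | g x != 0] = set0 ->
     [set x | f x != 0] `&` [set x | h x != 0] = set0 ->
     [set x | g x != 0] `&` [set x | h x != 0] = set0 ->
     op_eq P (quant P (fun x => f x + g x + h x))
       (op_sub (op_sub (op_sub
          (op_add (op_add (quant P (fun x => f x + g x))
                          (quant P (fun x => f x + h x)))
                  (quant P (fun x => g x + h x)))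
          (quant P f)) (quant P g)) (quant P h))).
Proof.
split; first exact: quant_indic.
split; first by move=> f a [mf _]; exact: quantZ.
split; first by move=> F f rvF; apply: quant_cvg => n; case: (rvF n).
by move=> f g h [mf _] [mg _] [mh _]; exact: quant_disjoint3.
Qed.
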